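(* Let $r,s,t$ be nonzero reals and $\lambda=(\lambda_k)_{k\ge0}$ a strictly increasing sequence of positive reals with $\lambda_k\to\infty$. Let $D=(d_{nk})$ be the inverse of the lower triangular matrix $B(r,s,t)$. For $x\in\omega$ put $\widehat W_k(x)=\frac{1}{\lambda_k}\sum_{j=0}^k(\lambda_j-\lambda_{j-1})(rx_j+sx_{j-1}+tx_{j-2})$ and $\alpha_k(\lambda)=\widehat W_k(x)$. For each fixed $k\in\mathbb{N}$ define $b^{(k)}(\lambda)=(b^{(k)}_n(\lambda))_{n\in\mathbb{N}}$ by $$b_n^{(k)}(\lambda)=\begin{cases}\dfrac{d_{nk}\lambda_k}{\lambda_k-\lambda_{k-1}}-\dfrac{d_{n,k+1}\lambda_k}{\lambda_{k+1}-\lambda_k},& n>k,\\[2mm] \dfrac{1}{r}\dfrac{\lambda_k}{\lambda_k-\lambda_{k-1}},& n=k,\\[2mm] 0,& n<k.\end{cases}$$ Then: (i) $(b^{(k)}(\lambda))_{k\in\mathbb{N}}$ is a Schauder basis of $c_0^\lambda(\widehat B)$, and every $x\in c_0^\lambda(\widehat B)$ has the unique representation $x=\sum_k\alpha_k(\lambda)b^{(k)}(\lambda)$; (ii) for $1\le p<\infty$, $(b^{(k)}(\lambda))_{k\in\mathbb{N}}$ is a Schauder basis of $\ell_p^\lambda(\widehat B)$, and every $x\in\ell_p^\lambda(\widehat B)$ has the unique representation $x=\sum_k\alpha_k(\lambda)b^{(k)}(\lambda)$; (iii) with $b=(b_k)$, $b_k=\sum_{j=0}^k d_{kj}$, the sequence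 $\{b,b^{(0)}(\lambda),b^{(1)}(\lambda),\dots\}$ is a Schauder basis of $c^\lambda(\widehat B)$, and every $x\in c^\lambda(\widehat B)$ has the unique representation $x=lb+\sum_k[\alpha_k(\lambda)-l]b^{(k)}(\lambda)$, where $l=\lim_{k\to\infty}\widehat W_k(x)$.
   Context: $\omega$: all complex sequences indexed by $\mathbb{N}=\{0,1,\dots\}$. Convention: terms with negative subscript are $0$. $B(r,s,t)=(b_{nk})$ is the lower triangular matrix with $b_{nn}=r$, $b_{n,n-1}=s$, $b_{n,n-2}=t$ and all other entries $0$; its inverse $D=(d_{nk})$ is lower triangular, explicitly $d_{nk}=\frac1r\sum_{v=0}^{n-k}\rho_1^{\,n-k-v}\rho_2^{\,v}$ for $0\le k\le n$ and $d_{nk}=0$ for $k>n$, where $\rho_{1,2}=\frac{-s\pm\sqrt{s^2-4tr}}{2r}$. For $\mu\in\{c_0,c,\ell_p\}$, $\mu^\lambda(\widehat B)=\{x\in\omega:(\widehat W_n(x))_n\in\mu\}$, normed by $\|x\|=\sup_n|\widehat W_n(x)|$ for $\mu\in\{c_0,c\}$ and $\|x\|=(\sum_n|\widehat W_n(x)|^p)^{1/p}$ for $\mu=\ell_p$. A sequence $(e_k)$ in a normed space $X$ is a Schauder basis if every $x\in X$ has a unique expansion $x=\sum_k\beta_ke_k$ convergent in norm. *)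

From mathcomp Require Import all_boot all_order all_algebra.
From mathcomp Require Import all_classical all_reals all_analysis.
From mathcomp Require Export complex.
Import Order.TTheory GRing.Theory Num.Theory.
Import numFieldNormedType.Exports.

Set Implicit Arguments.
Unset Strict Implicit.
Unset Printing Implicit Defensive.

Local Open Scope classical_set_scope.
Local Open Scope ring_scope.
Local Open Scope complex_scope.

Section Defs.
Variable R : realType.

(* convention: terms with negative subscript are 0 *)
Definition prev {T : nmodType} (f : nat -> T) (j : nat) : T :=
  if j is j'.+1 then f j' else 0.

Definition Bmat (r s t : R) (n k : nat) : R :=
  if n == k then r else if n == k.+1 then s else if n == k.+2 then t else 0.

Definition What (r s t : R) (lam : nat -> R) (x : nat -> R[i]) (k : nat) : R[i] :=
  ((lam k)^-1)%:C * \sum_(j < k.+1)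
     ((lam j - prev lam j)%:C *
      (r%:C * x j + s%:C * prev x j + t%:C * prev (prev x) j)).

Definition bk (r : R) (d : nat -> nat -> R) (lam : nat -> R) (k : nat) (n : nat) : R[i] :=
  if (k < n)%N then
    (d n k * lam k / (lam k - prev lam k) - d n k.+1 * lam k / (lam k.+1 - lam k))%:C
  else if n == k then (r^-1 * (lam k / (lam k - prev lam k)))%:C
  else 0.

Definition bvec (d : nat -> nat -> R) (k : nat) : R[i] := (\sum_(j < k.+1) d k j)%:C.

Definition c0_lam (r s t : R) (lam : nat -> R) (x : nat -> R[i]) : Prop :=
  (fun n => Normc.normc (What r s t lam x n)) @ \oo --> (0 : R).

Definition c_lam (r s t : R) (lam : nat -> R) (x : nat -> R[i]) : Prop :=
  exists l : R[i], (fun n => Normc.normc (What r s t lam x n - l)) @ \oo --> (0 : R).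

Definition lp_lam (p : R) (r s t : R) (lam : nat -> R) (x : nat -> R[i]) : Prop :=
  cvgn (series (fun n => Normc.normc (What r s t lam x n) `^ p)).

Definition sup_norm (r s t : R) (lam : nat -> R) (x : nat -> R[i]) : R :=
  sup (range (fun n => Normc.normc (What r s t lam x n))).

Definition lp_norm (p : R) (r s t : R) (lam : nat -> R) (x : nat -> R[i]) : R :=
  (limn (series (fun n => Normc.normc (What r s t lam x n) `^ p))) `^ (p^-1).

Definition expands (N : (nat -> R[i]) -> R) (e : nat -> nat -> R[i])
    (beta : nat -> R[i]) (x : nat -> R[i]) : Prop :=
  (fun m => N (fun n => x n - \sum_(k < m) beta k * e k n)) @ \oo --> (0 : R).

Definition schauder_basis (X : (nat -> R[i]) -> Prop) (N : (nat -> R[i]) -> R)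
    (e : nat -> nat -> R[i]) : Prop :=
  (forall k, X (e k)) /\
  (forall x, X x -> exists! beta : nat -> R[i], expands N e beta x).

End Defs.

From Pilot Require Import Defs.
From mathcomp Require Import all_boot all_order all_algebra.
From mathcomp Require Import all_classical all_reals all_analysis.
From mathcomp Require Import complex.
From mathcomp Require Import ring zify.
Import Order.TTheory GRing.Theory Num.Theory.
Import numFieldNormedType.Exports.
(* re-exported last so that [prev] denotes [Defs.prev], not the cycle predecessor of [path] *)
Import Defs.
Local Open Scope classical_set_scope.
Local Open Scope ring_scope.
Local Open Scope complex_scope.

Set Implicit Arguments.
Unset Strict Implicit.
Unset Printing Implicit Defensive.

(* Proof idea.  x |-> W x := (\widehat W_n(x))_n is linear, and because D inverts B and
   the factors lam_k / (lam_k - lam_{k-1}) invert the weighted mean, it maps b^(k) to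
   the k-th unit sequence and b to the constant sequence 1.  Hence the m-th partial
   sum of sum_k beta_k b^(k) is sent to the truncation of beta to its first m terms,
   and every claim becomes a statement about w = W x in c0, l_p or c: truncations of
   w converge to w in norm, and conversely each |w_k - beta_k| (and, in c, |l - beta_0|)
   is bounded by the norm of the remainder, which forces beta = w. *)

Definition trunc_seq {V : nmodType} (m : nat) (b : nat -> V) (n : nat) : V :=
  if (n < m)%N then b n else 0.

Lemma sum_mul_delta (V : pzRingType) (b : nat -> V) (m n : nat) :
  \sum_(k < m) b k * ((k == n :> nat)%:R) = trunc_seq m b n.
Proof.
under eq_bigr do rewrite mulr_natr mulrb.
by rewrite -big_mkcond big_ord1_eq.
Qed.

Section SequenceNorms.
Variable R : realType.
Local Notation nc := (@Normc.normc R).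
Implicit Types (u w b : nat -> R[i]) (v : nat -> R).

Lemma normc_ge0 (z : R[i]) : 0 <= nc z.
Proof. by case: z => a b; exact: sqrtr_ge0. Qed.

Lemma normc_cvg0_le w e : (fun n => nc (w n)) @ \oo --> 0 -> 0 < e ->
  exists N, forall n, (N <= n)%N -> nc (w n) <= e.
Proof.
move=> /cvgr0Pnorm_le /(_ e) hw /hw [N _ hN].
by exists N => n /hN; rewrite ger0_norm ?normc_ge0.
Qed.

Lemma le_cvg0 v c : v @ \oo --> 0 -> (\forall n \near \oo, c <= v n) -> c <= 0.
Proof. by move=> hv /(limr_ge (cvgP _ hv)); rewrite (cvg_lim _ hv). Qed.

Lemma normc_le_cvg0 (z : R[i]) v : v @ \oo --> 0 ->
  (\forall n \near \oo, nc z <= v n) -> z = 0.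
Proof.
move=> hv hz; apply: Normc.eq0_normc; apply/eqP.
by rewrite eq_le normc_ge0 andbT (le_cvg0 hv hz).
Qed.

Definition sup_normc u : R := sup (range (fun n => nc (u n))).

(* [sup] of an unbounded set is a junk value, hence the bound on a tail of [u]. *)
Lemma normc_le_sup_normc u N C k :
  (forall n, (N <= n)%N -> nc (u n) <= C) -> nc (u k) <= sup_normc u.
Proof.
move=> hC; apply: ub_le_sup; last by exists k.
exists (C + \sum_(j < N) nc (u j)) => _ [n _ <-].
have sum_ge0 : 0 <= \sum_(j < N) nc (u j) by apply: sumr_ge0 => j _; exact: normc_ge0.
case: (leqP N n) => [/hC leC|ltnN]; first by rewrite ler_wpDr.
have C_ge0 : 0 <= C := le_trans (normc_ge0 _) (hC N (leqnn N)).
rewrite ler_wpDl // (bigD1 (Ordinal ltnN)) //= ler_wpDr //.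
by apply: sumr_ge0 => j _; exact: normc_ge0.
Qed.

Lemma norm_sup_normc_le u e : (forall n, nc (u n) <= e) -> `|sup_normc u| <= e.
Proof.
move=> he; rewrite ger0_norm.
  by apply: ge_sup => [|_ [n _ <-]]; [exists (nc (u 0%N)), 0%N | exact: he].
exact: le_trans (normc_ge0 (u 0%N)) (@normc_le_sup_normc u 0 e 0 (fun n _ => he n)).
Qed.

Lemma c0_trunc_cvg w : (fun n => nc (w n)) @ \oo --> 0 ->
  (fun m => sup_normc (fun n => w n - trunc_seq m w n)) @ \oo --> 0.
Proof.
move=> hw; apply/cvgr0Pnorm_le => e e0; have [N hN] := normc_cvg0_le hw e0.
exists N => // m /= leNm; apply: norm_sup_normc_le => n; rewrite /trunc_seq.
case: ltnP => [_|lemn]; first by rewrite subrr Normc.normc0 ltW.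
by rewrite subr0 hN // (leq_trans leNm).
Qed.

Lemma c0_trunc_uniq w b : (fun n => nc (w n)) @ \oo --> 0 ->
  (fun m => sup_normc (fun n => w n - trunc_seq m b n)) @ \oo --> 0 -> b = w.
Proof.
move=> hw hb; apply/funext => k; symmetry; apply/subr0_eq.
apply: normc_le_cvg0 hb _; have [N hN] := normc_cvg0_le hw ltr01.
exists k.+1 => // m /= ltkm.
have -> : w k - b k = w k - trunc_seq m b k by rewrite /trunc_seq ltkm.
apply: (@normc_le_sup_normc _ (maxn N m) 1) => n; rewrite geq_max => /andP[leNn lemn].
by rewrite /trunc_seq ltnNge lemn subr0 hN.
Qed.

Lemma sup_normc_subDE w l b :
  (fun m => sup_normc (fun n => w n - (l + trunc_seq m b n))) =
  (fun m => sup_normc (fun n => (w n - l) - trunc_seq m b n)).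
Proof. by apply/funext => m; congr sup_normc; apply/funext => n; rewrite opprD addrA. Qed.

Lemma c_trunc_cvg w l : (fun n => nc (w n - l)) @ \oo --> 0 ->
  (fun m => sup_normc (fun n => w n - (l + trunc_seq m (fun k => w k - l) n))) @ \oo --> 0.
Proof. by rewrite sup_normc_subDE; exact: c0_trunc_cvg. Qed.

Lemma c_trunc_uniq w l (b0 : R[i]) b : (fun n => nc (w n - l)) @ \oo --> 0 ->
  (fun m => sup_normc (fun n => w n - (b0 + trunc_seq m b n))) @ \oo --> 0 ->
  b0 = l /\ forall k, b k = w k - l.
Proof.
move=> hl hb; have [N hN] := normc_cvg0_le hl ltr01.
have tailE m n : (m <= n)%N -> w n - (b0 + trunc_seq m b n) = (w n - l) + (l - b0).
  by move=> lemn; rewrite /trunc_seq ltnNge lemn addr0 addrA subrK.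
have le_sup m : nc (l - b0) <= sup_normc (fun n => w n - (b0 + trunc_seq m b n)).
  set u := fun n => _.
  have u_le n : nc (u n) <= sup_normc u.
    apply: (@normc_le_sup_normc u (maxn N m) (1 + nc (l - b0))) => j.
    rewrite geq_max => /andP[leNj lemj].
    by rewrite /u tailE // (le_trans (le_normcD _ _)) // lerD2r hN.
  (* far out, the remainder is w n - b0, which tends to l - b0 *)
  rewrite -subr_le0; apply: le_cvg0 hl _; exists m => // n /= lemn.
  rewrite lerBlDr; have -> : l - b0 = - (w n - l) + u n by rewrite /u tailE // addKr.
  by rewrite (le_trans (le_normcD _ _)) // normcN lerD2l.
have b0l : b0 = l.
  by symmetry; apply/subr0_eq; apply: normc_le_cvg0 hb _; exists 0%N => // m _; exact: le_sup.
rewrite b0l sup_normc_subDE in hb.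
by split=> // k; rewrite (c0_trunc_uniq hl hb).
Qed.

Lemma delta_c0 k : (fun n => nc ((n == k)%:R)) @ \oo --> 0.
Proof.
apply/cvgr0Pnorm_le => e e0; exists k.+1 => // n /= ltkn.
by rewrite (gtn_eqF ltkn) Normc.normc0 normr0 ltW.
Qed.

Lemma series_le_limn v m : (forall n, 0 <= v n) -> cvgn (series v) ->
  series v m <= limn (series v).
Proof.
move=> v0 cv; apply: nondecreasing_cvgn_le cv m => a b leab.
by apply: nondecreasing_series => // n _ _; exact: v0.
Qed.

Lemma le_limn_series v k : (forall n, 0 <= v n) -> cvgn (series v) ->
  v k <= limn (series v).
Proof.
move=> v0 cv; apply: le_trans (series_le_limn k.+1 v0 cv).
by rewrite seriesSr lerDr /series /=; apply: sumr_ge0 => n _; exact: v0.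
Qed.

Lemma cvg_series_eq_tail v v' m : (forall n, (m <= n)%N -> v n = v' n) ->
  cvgn (series v') -> series v @ \oo --> limn (series v') + \sum_(j < m) (v j - v' j).
Proof.
move=> eq_tail cv'.
have E : {near \oo, (fun n => series v' n + \sum_(j < m) (v j - v' j)) =1 series v}.
  exists m => // n /= lemn; rewrite /series /= sumrB -!(big_mkord xpredT).
  rewrite (big_cat_nat _ (n := m)) // [in RHS](big_cat_nat _ (n := m)) //=.
  rewrite (@eq_big_nat _ _ _ m n v v').
    by ring.
  by move=> j /andP[lemj _]; exact: eq_tail.
by apply: cvg_trans (near_eq_cvg E) _; apply: cvgD => //; exact: cvg_cst.
Qed.

Lemma powR_cvg0_seq v q : 0 < q -> (forall n, 0 <= v n) -> v @ \oo --> 0 ->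
  (fun n => v n `^ q) @ \oo --> 0.
Proof.
move=> q0 v0 /cvgr0Pnorm_le hv; apply/cvgr0Pnorm_le => e e0.
have [N _ hN] := hv _ (powR_gt0 q^-1 e0).
exists N => // n /hN; rewrite !ger0_norm ?powR_ge0 // => le_ve.
rewrite -[leRHS](powRr1 (ltW e0)) -(mulVf (lt0r_neq0 q0)) powRrM.
by apply: ge0_ler_powR; rewrite ?nnegrE ?powR_ge0 // ltW.
Qed.

Definition lp_normc (p : R) u : R := (limn (series (fun n => nc (u n) `^ p))) `^ p^-1.

Lemma lp_trunc_cvg p w : 0 < p -> cvgn (series (fun n => nc (w n) `^ p)) ->
  (fun m => lp_normc p (fun n => w n - trunc_seq m w n)) @ \oo --> 0.
Proof.
set g := fun n => nc (w n) `^ p; move=> p0 hw.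
have E m : lp_normc p (fun n => w n - trunc_seq m w n) =
           (limn (series g) - series g m) `^ p^-1.
  rewrite /lp_normc; congr (_ `^ _); apply: cvg_lim => //.
  have -> : - series g m = \sum_(j < m) (nc (w j - trunc_seq m w j) `^ p - g j).
    rewrite /series /= big_mkord -sumrN; apply: eq_bigr => j _.
    by rewrite /trunc_seq ltn_ord subrr Normc.normc0 powR0 ?gt_eqF // sub0r.
  by apply: cvg_series_eq_tail hw => n lemn; rewrite /trunc_seq ltnNge lemn subr0.
rewrite (funext E); apply: powR_cvg0_seq => [|m|]; first by rewrite invr_gt0.
  by rewrite subr_ge0 series_le_limn // => n; exact: powR_ge0.
by rewrite -(subrr (limn (series g))); apply: cvgB => //; exact: cvg_cst.
Qed.

Lemma lp_trunc_uniq p w b : 0 < p -> cvgn (series (fun n => nc (w n) `^ p)) ->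
  (fun m => lp_normc p (fun n => w n - trunc_seq m b n)) @ \oo --> 0 -> b = w.
Proof.
move=> p0 hw hb; apply/funext => k; symmetry; apply/subr0_eq.
apply: normc_le_cvg0 hb _; exists k.+1 => // m /= ltkm.
set f := fun n => nc (w n - trunc_seq m b n) `^ p.
have cf : cvgn (series f).
  apply: cvgP (cvg_series_eq_tail (m := m) _ hw) => n lemn.
  by rewrite /f /trunc_seq ltnNge lemn subr0.
have le_fk : nc (w k - b k) `^ p <= limn (series f).
  by have := le_limn_series k (fun n => powR_ge0 _ _) cf; rewrite /f /trunc_seq ltkm.
rewrite /lp_normc -[leLHS](powRr1 (normc_ge0 _)) -(mulfV (lt0r_neq0 p0)) powRrM.
apply: ge0_ler_powR; rewrite ?nnegrE ?powR_ge0 ?invr_ge0 ?(ltW p0) //.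
exact: le_trans (powR_ge0 _ _) le_fk.
Qed.

Lemma delta_lp p k : 0 < p -> cvgn (series (fun n => nc ((n == k)%:R) `^ p)).
Proof.
move=> p0; have series0 : series (fun=> 0 : R) = fun=> 0.
  by apply/funext => n; rewrite /series /= big1.
apply: cvgP (cvg_series_eq_tail (m := k.+1) (v' := fun=> 0) _ _) => [n ltkn|].
  by rewrite (gtn_eqF ltkn) Normc.normc0 powR0 ?gt_eqF.
by rewrite series0; exact: is_cvg_cst.
Qed.

End SequenceNorms.

Section WhatLinear.
Variables (R : realType) (r s t : R) (lam : nat -> R).
Local Notation W := (What r s t lam).

Lemma WhatD (x y : nat -> R[i]) n : W (fun i => x i + y i) n = W x n + W y n.
Proof.
rewrite /What -mulrDr -big_split; congr (_ * _); apply: eq_bigr => j _.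
by case: (nat_of_ord j) => [|[|j']] /=; ring.
Qed.

Lemma WhatZ c (x : nat -> R[i]) n : W (fun i => c * x i) n = c * W x n.
Proof.
rewrite /What [RHS]mulrCA; congr (_ * _); rewrite mulr_sumr; apply: eq_bigr => j _.
by case: (nat_of_ord j) => [|[|j']] /=; ring.
Qed.

Lemma What0 n : W (fun=> 0) n = 0.
Proof.
rewrite /What big1 ?mulr0 // => j _.
by case: (nat_of_ord j) => [|[|j']] /=; ring.
Qed.

Lemma What_sum m (f : nat -> nat -> R[i]) n :
  W (fun i => \sum_(k < m) f k i) n = \sum_(k < m) W (f k) n.
Proof.
elim: m => [|m IH].
  rewrite big_ord0 -[RHS](What0 n); congr (W _ n).
  by apply/funext => i; rewrite big_ord0.
rewrite big_ord_recr /= -IH -WhatD; congr (W _ n).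
by apply/funext => i; rewrite big_ord_recr.
Qed.

Lemma What_sub_sumZ (x b : nat -> R[i]) (e : nat -> nat -> R[i]) m n :
  W (fun i => x i - \sum_(k < m) b k * e k i) n = W x n - \sum_(k < m) b k * W (e k) n.
Proof.
have -> : (fun i => x i - \sum_(k < m) b k * e k i) =
          (fun i => x i + -1 * \sum_(k < m) (fun k i => b k * e k i) k i).
  by apply/funext => i; rewrite mulN1r.
rewrite WhatD WhatZ (What_sum _ (fun k i => b k * e k i)) mulN1r; congr (_ - _).
by apply: eq_bigr => k _; rewrite WhatZ.
Qed.

Lemma Bmat_rowE (x : nat -> R) j :
  r * x j + s * prev x j + t * prev (prev x) j = \sum_(i < j.+1) Bmat r s t j i * x i.
Proof.
rewrite /Bmat; case: j => [|[|j]]; rewrite !big_ord_recr ?big_ord0 /= ?eqxx /=; try ring.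
rewrite big1 => [|i _]; last by have hi := ltn_ord i; rewrite !ifN ?mul0r //; lia.
by rewrite !ifN //=; first ring; lia.
Qed.

Lemma What_real (u : nat -> R) n :
  W (fun i => (u i)%:C) n =
  ((lam n)^-1 * \sum_(j < n.+1) (lam j - prev lam j) * \sum_(i < j.+1) Bmat r s t j i * u i)%:C.
Proof.
rewrite /What rmorphM rmorph_sum; congr (_ * _); apply: eq_bigr => j _.
rewrite -Bmat_rowE.
by case: (nat_of_ord j) => [|[|j']] /=; rewrite !rmorphM !rmorphD ?rmorphB ?rmorph0 /=; ring.
Qed.

Lemma sup_normE : sup_norm r s t lam = fun x => sup_normc (W x).
Proof. by []. Qed.

Lemma lp_normE p : lp_norm p r s t lam = fun x => lp_normc p (W x).
Proof. by []. Qed.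

End WhatLinear.

Lemma sum_sub_prev (V : zmodType) (u : nat -> V) n :
  \sum_(j < n.+1) (u j - prev u j) = u n.
Proof.
elim: n => [|n IH]; first by rewrite big_ord1 subr0.
by rewrite big_ord_recr IH /= addrC subrK.
Qed.

Section BasisImage.
Variables (R : realType) (r s t : R) (lam : nat -> R) (d : nat -> nat -> R).
Hypothesis r_neq0 : r != 0.
Hypothesis lam_gt0 : forall k, 0 < lam k.
Hypothesis lam_incr : forall k, lam k < lam k.+1.
Hypothesis d_lower : forall n k, (n < k)%N -> d n k = 0.
Hypothesis d_inv_r : forall n k, \sum_(j < n.+1) Bmat r s t n j * d j k = (n == k)%:R.
Hypothesis d_inv_l : forall n k, \sum_(j < n.+1) d n j * Bmat r s t j k = (n == k)%:R.
Local Notation W := (What r s t lam).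

Lemma d_diag k : d k k = r^-1.
Proof.
have := d_inv_l k k; rewrite big_ord_recr /= big1 => [|j _].
  by rewrite /Bmat eqxx add0r /= => /(canRL (mulfK r_neq0)); rewrite mul1r.
by have hj := ltn_ord j; rewrite /Bmat !ifN ?mulr0 //; lia.
Qed.

Lemma lam_step_neq0 k : lam k - prev lam k != 0.
Proof. by case: k => [|k] /=; rewrite ?subr0 ?subr_eq0 gt_eqF. Qed.

Lemma bkE k i : bk r d lam k i =
  (d i k * (lam k / (lam k - prev lam k)) - d i k.+1 * (lam k / (lam k.+1 - lam k)))%:C.
Proof.
rewrite /bk; case: (ltngtP k i) => [ltki|ltik|<-]; first by rewrite !mulrA.
  by rewrite !d_lower ?mul0r ?subr0 //; lia.
by rewrite d_diag d_lower // mul0r subr0.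
Qed.

Lemma What_bk k n : W (bk r d lam k) n = (n == k)%:R.
Proof.
set c1 := lam k / (lam k - prev lam k); set c2 := lam k / (lam k.+1 - lam k).
have -> : bk r d lam k = fun i => (d i k * c1 - d i k.+1 * c2)%:C.
  by apply/funext => i; rewrite bkE.
rewrite What_real -(rmorph_nat (real_complex R)); congr (_%:C).
have row j : \sum_(i < j.+1) Bmat r s t j i * (d i k * c1 - d i k.+1 * c2) =
             (j == k)%:R * c1 - (j == k.+1)%:R * c2.
  under eq_bigr do rewrite mulrBr !(mulrA (Bmat _ _ _ _ _)).
  by rewrite sumrB -!mulr_suml !d_inv_r.
have step j : (lam j - prev lam j) * ((j == k)%:R * c1 - (j == k.+1)%:R * c2) =
    (lam j - prev lam j) * c1 * (j == k)%:R - (lam j - prev lam j) * c2 * (j == k.+1)%:R.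
  by ring.
under eq_bigr do rewrite row step.
rewrite sumrB (sum_mul_delta (fun j => (lam j - prev lam j) * c1)).
rewrite (sum_mul_delta (fun j => (lam j - prev lam j) * c2)) /trunc_seq /=.
have -> : (lam k - prev lam k) * c1 = lam k by rewrite /c1 mulrC divfK ?lam_step_neq0.
have -> : (lam k.+1 - lam k) * c2 = lam k by rewrite /c2 mulrC divfK ?(lam_step_neq0 k.+1).
case: (ltngtP n k) => [ltnk|ltkn|->]; last by rewrite ltnSn ltnn subr0 mulVf ?gt_eqF.
  by rewrite !ifF ?subrr ?mulr0 //; apply/negbTE; lia.
by rewrite !ifT ?subrr ?mulr0 //; lia.
Qed.

Lemma What_bvec n : W (bvec d) n = 1.
Proof.
rewrite /bvec What_real -(rmorph1 (real_complex R)); congr (_%:C).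
have row j : \sum_(i < j.+1) Bmat r s t j i * \sum_(l < i.+1) d i l = 1.
  have widen (i : 'I_j.+1) : \sum_(l < i.+1) d i l = \sum_(l < j.+1) d i l.
    rewrite -!(big_mkord xpredT) [RHS](big_cat_nat _ (n := i.+1)) ?ltn_ord //=.
    rewrite [X in _ + X]big1_seq ?addr0 // => l /andP[_].
    by rewrite mem_index_iota => /andP[/d_lower].
  under eq_bigr do rewrite widen mulr_sumr.
  rewrite exchange_big /=; under eq_bigr do rewrite d_inv_r eq_sym -[_%:R]mul1r.
  by rewrite (sum_mul_delta (fun=> 1)) /trunc_seq ltnSn.
under eq_bigr do rewrite row mulr1.
by rewrite sum_sub_prev mulVf ?gt_eqF.
Qed.

Definition bvec_bk (k : nat) : nat -> R[i] :=
  if k is k'.+1 then bk r d lam k' else bvec d.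

Lemma expands_bk (N : (nat -> R[i]) -> R) (beta x : nat -> R[i]) :
  expands (fun y => N (W y)) (bk r d lam) beta x <->
  (fun m => N (fun n => W x n - trunc_seq m beta n)) @ \oo --> 0.
Proof.
rewrite /expands /=.
suff -> : (fun m => N (W (fun n => x n - \sum_(k < m) beta k * bk r d lam k n))) =
          (fun m => N (fun n => W x n - trunc_seq m beta n)) by [].
apply/funext => m; congr N; apply/funext => n.
rewrite What_sub_sumZ -sum_mul_delta; congr (_ - _).
by apply: eq_bigr => k _; rewrite What_bk eq_sym.
Qed.

Lemma expands_bvec_bk (N : (nat -> R[i]) -> R) (beta x : nat -> R[i]) :
  expands (fun y => N (W y)) bvec_bk beta x <->
  (fun m => N (fun n => W x n - (beta 0%N + trunc_seq m (fun k => beta k.+1) n)))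
    @ \oo --> 0.
Proof.
rewrite /expands -cvg_shiftS /=.
suff -> : (fun m => N (W (fun n => x n - \sum_(k < m.+1) beta k * bvec_bk k n))) =
          (fun m => N (fun n => W x n - (beta 0%N + trunc_seq m (fun k => beta k.+1) n))).
  by [].
apply/funext => m; congr N; apply/funext => n.
rewrite What_sub_sumZ big_ord_recl /= What_bvec mulr1.
rewrite -(sum_mul_delta (fun k => beta k.+1)); congr (_ - (_ + _)).
by apply: eq_bigr => k _; rewrite What_bk eq_sym.
Qed.

Lemma c0_lam_basis :
  schauder_basis (c0_lam r s t lam) (sup_norm r s t lam) (bk r d lam) /\
  forall x, c0_lam r s t lam x -> expands (sup_norm r s t lam) (bk r d lam) (W x) x.
Proof.
rewrite sup_normE.
have expW x : c0_lam r s t lam x -> expands (fun y => sup_normc (W y)) (bk r d lam) (W x) x.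
  by move=> hx; apply/expands_bk; exact: c0_trunc_cvg.
split=> //; split=> [k|x hx].
  by rewrite /c0_lam; under eq_fun do rewrite What_bk; exact: delta_c0.
exists (W x); split=> [|b /expands_bk hb]; first exact: expW.
exact: esym (c0_trunc_uniq hx hb).
Qed.

Lemma lp_lam_basis p : 0 < p ->
  schauder_basis (lp_lam p r s t lam) (lp_norm p r s t lam) (bk r d lam) /\
  forall x, lp_lam p r s t lam x -> expands (lp_norm p r s t lam) (bk r d lam) (W x) x.
Proof.
move=> p_gt0; rewrite lp_normE.
have expW x : lp_lam p r s t lam x -> expands (fun y => lp_normc p (W y)) (bk r d lam) (W x) x.
  by move=> hx; apply/expands_bk; exact: lp_trunc_cvg.
split=> //; split=> [k|x hx].
  by rewrite /lp_lam; under eq_fun do rewrite What_bk; exact: delta_lp.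
exists (W x); split=> [|b /expands_bk hb]; first exact: expW.
exact: esym (lp_trunc_uniq p_gt0 hx hb).
Qed.

Lemma c_lam_basis :
  schauder_basis (c_lam r s t lam) (sup_norm r s t lam) bvec_bk /\
  forall x l, c_lam r s t lam x -> (fun n => Normc.normc (W x n - l)) @ \oo --> 0 ->
    expands (sup_norm r s t lam) bvec_bk (fun k => if k is k'.+1 then W x k' - l else l) x.
Proof.
rewrite sup_normE.
have expW x l : (fun n => Normc.normc (W x n - l)) @ \oo --> 0 ->
    expands (fun y => sup_normc (W y)) bvec_bk
      (fun k => if k is k'.+1 then W x k' - l else l) x.
  by move=> hl; apply/expands_bvec_bk; exact: c_trunc_cvg.
split=> [|x l _]; last exact: expW.
split=> [[|k]|x [l hl]].
- by exists 1; under eq_fun do rewrite What_bvec subrr Normc.normc0; exact: cvg_cst.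
- by exists 0; under eq_fun do rewrite What_bk subr0; exact: delta_c0.
exists (fun k => if k is k'.+1 then W x k' - l else l).
split=> [|b /expands_bvec_bk hb]; first exact: expW.
have [b0l bS] := c_trunc_uniq hl hb.
by apply/funext => -[|k] /=; rewrite ?b0l ?bS.
Qed.

End BasisImage.

Theorem theorem3 (R : realType) (r s t : R) (lam : nat -> R) (d : nat -> nat -> R)
  (hr : r != 0) (hs : s != 0) (ht : t != 0)
  (lam_pos : forall k, 0 < lam k)
  (lam_incr : forall k, lam k < lam k.+1)
  (lam_infty : lam @ \oo --> +oo)
  (d_lower : forall n k, (n < k)%N -> d n k = 0)
  (d_inv_r : forall n k, \sum_(j < n.+1) Bmat r s t n j * d j k = (n == k)%:R)
  (d_inv_l : forall n k, \sum_(j < n.+1) d n j * Bmat r s t j k = (n == k)%:R) :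
  (schauder_basis (c0_lam r s t lam) (sup_norm r s t lam) (bk r d lam) /\
   forall x, c0_lam r s t lam x ->
     expands (sup_norm r s t lam) (bk r d lam) (What r s t lam x) x) /\
  (forall p : R, 1 <= p ->
   schauder_basis (lp_lam p r s t lam) (lp_norm p r s t lam) (bk r d lam) /\
   forall x, lp_lam p r s t lam x ->
     expands (lp_norm p r s t lam) (bk r d lam) (What r s t lam x) x) /\
  (let e := fun k => if k is k'.+1 then bk r d lam k' else bvec d in
   schauder_basis (c_lam r s t lam) (sup_norm r s t lam) e /\
   forall x (l : R[i]), c_lam r s t lam x ->
     (fun n => Normc.normc (What r s t lam x n - l)) @ \oo --> (0 : R) ->
     expands (sup_norm r s t lam) e
       (fun k => if k is k'.+1 then What r s t lam x k' - l else l) x).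
Proof.
have p_gt0 p : 1 <= p -> 0 < p by exact: lt_le_trans ltr01.
split; first exact: c0_lam_basis.
split; last exact: c_lam_basis.
by move=> p /p_gt0; exact: lp_lam_basis.
Qed.
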